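(* For $n=2$ (so $d_2=\frac34$), $\lim_{h\to3/4}\tilde B_2(h)=\frac35$, and consequently the limit wave speed $c_0(h)=\frac{1}{1-\tilde B_2(h)}$ satisfies $\lim_{h\to3/4}c_0(h)=\frac52$.
   Context: For $n=2$: $W(u)=\frac{u^2}{2}-\frac{u^4}{12}$, $H(u,v)=\frac{v^2}{2}+W(u)$; for $h\in(0,\frac34)$, $\Gamma_h$ is the periodic orbit in $\{H=h\}$ surrounding the origin of $u'=v$, $v'=-u+\frac13u^3$, oriented clockwise; $\tilde B_2(h)=\oint_{\Gamma_h}u^2v\,du\big/\oint_{\Gamma_h}v\,du$. *)

From Stdlib Require Import Reals.
From Coquelicot Require Import Coquelicot.
Open Scope R_scope.

Definition W (u : R) : R := u ^ 2 / 2 - u ^ 4 / 12.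
Definition Ham (u v : R) : R := v ^ 2 / 2 + W u.

(* d_2 = dcrit = W(sqrt 3) = 3/4, the energy of the saddle points (+-sqrt 3, 0). *)
Definition dcrit : R := 3 / 4.

(* Turning point of the periodic orbit Gamma_h, 0 < h < 3/4:
   the unique a in (0, sqrt 3) with W a = h, i.e. a^2 = 3 - sqrt(9 - 12 h)
   (the smaller positive root of u^4 - 6 u^2 + 12 h = 0). *)
Definition turn (h : R) : R := sqrt (3 - sqrt (9 - 12 * h)).

Definition vplus (h u : R) : R := sqrt (2 * (h - W u)).

(* Line integral  \oint_{Gamma_h} P(u,v) du  of the 1-form P du along the
   periodic orbit Gamma_h, oriented clockwise (the flow u' = v moves to the
   right on the upper arc v > 0 and to the left on the lower arc v < 0). *)
Definition oint_du (P : R -> R -> R) (h : R) : R :=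
  RInt (fun u => P u (vplus h u)) (- turn h) (turn h)
  + RInt (fun u => P u (- vplus h u)) (turn h) (- turn h).

Definition B2t (h : R) : R :=
  oint_du (fun u v => u ^ 2 * v) h / oint_du (fun _ v => v) h.

Definition c0 (h : R) : R := 1 / (1 - B2t h).

From Stdlib Require Import Reals Lra Psatz.
From Coquelicot Require Import Coquelicot.
Open Scope R_scope.

(* Both arcs of the orbit contribute equally, so each orbit integral is
   [2 \int k(u) v_+(h,u) du] between the turning points [+-a(h)].  These
   endpoints can be pushed out to [+-sqrt 3] once and for all: between [a(h)]
   and [sqrt 3] the potential exceeds [h], so the square root defining [v_+]
   is taken of a negative number and vanishes.  On the fixed interval,
   [|sqrt x - sqrt y| <= sqrt |x - y|] makes [h |-> \int k v_+] Hölder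
   continuous, so the limit [h -> 3/4] is the value on the separatrix, where
   [v_+ = (3 - u^2)/sqrt 6] and the integrals are polynomial:
   [\int u^2 (3 - u^2) = 12 sqrt 3 / 5] and [\int (3 - u^2) = 4 sqrt 3]. *)

Lemma sqrt_sub_le x y : y <= x -> sqrt x - sqrt y <= sqrt (x - y).
Proof.
  intros Hxy. destruct (Rle_or_lt y 0) as [Hy | Hy].
  - rewrite (sqrt_neg_0 y Hy). assert (sqrt x <= sqrt (x - y)) by (apply sqrt_le_1_alt; lra). lra.
  - (* [sqrt x <= sqrt y + sqrt (x - y)] because the right side squares to at least [x]. *)
    set (p := sqrt y). set (q := sqrt (x - y)).
    assert (0 <= p) by apply sqrt_pos. assert (0 <= q) by apply sqrt_pos.
    assert (p * p = y) by (apply sqrt_sqrt; lra).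
    assert (q * q = x - y) by (apply sqrt_sqrt; lra).
    assert (Hx : sqrt x <= sqrt ((p + q) * (p + q))) by (apply sqrt_le_1_alt; nra).
    rewrite sqrt_square in Hx by lra. lra.
Qed.

Lemma Rabs_sqrt_sub_le x y : Rabs (sqrt x - sqrt y) <= sqrt (Rabs (x - y)).
Proof.
  destruct (Rle_or_lt y x) as [Hyx | Hxy].
  - assert (sqrt y <= sqrt x) by (apply sqrt_le_1_alt; lra).
    rewrite !Rabs_pos_eq by lra. now apply sqrt_sub_le.
  - assert (sqrt x <= sqrt y) by (apply sqrt_le_1_alt; lra).
    rewrite !Rabs_left1 by lra. rewrite !Ropp_minus_distr. apply sqrt_sub_le; lra.
Qed.

Lemma Rabs_vplus_sub_le h h' u :
  Rabs (vplus h u - vplus h' u) <= sqrt 2 * sqrt (Rabs (h - h')).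
Proof.
  unfold vplus. eapply Rle_trans; [apply Rabs_sqrt_sub_le |].
  replace (2 * (h - W u) - 2 * (h' - W u)) with (2 * (h - h')) by ring.
  rewrite Rabs_mult, Rabs_pos_eq by lra.
  rewrite sqrt_mult by (lra || apply Rabs_pos). lra.
Qed.

Lemma continuous_vplus h u : continuous (vplus h) u.
Proof.
  apply continuous_sqrt_comp, (@ex_derive_continuous R_AbsRing R_NormedModule).
  unfold W. auto_derive. trivial.
Qed.

Lemma turn_sq h : 0 <= h <= 3 / 4 -> turn h ^ 2 = 3 - sqrt (9 - 12 * h).
Proof.
  intros Hh. unfold turn. rewrite pow2_sqrt; [reflexivity |].
  assert (Hs : sqrt (9 - 12 * h) <= sqrt (3 * 3)) by (apply sqrt_le_1_alt; lra).
  rewrite sqrt_square in Hs; lra.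
Qed.

Lemma turn_le_sqrt3 h : 0 <= turn h <= sqrt 3.
Proof.
  split; [apply sqrt_pos |]. apply sqrt_le_1_alt.
  pose proof (sqrt_pos (9 - 12 * h)). lra.
Qed.

(* [W u - W a = (u^2 - a^2) (6 - u^2 - a^2) / 12] with [W (turn h) = h]. *)
Lemma vplus_beyond_turn h u :
  0 <= h <= 3 / 4 -> turn h <= Rabs u <= sqrt 3 -> vplus h u = 0.
Proof.
  intros Hh Hu. unfold vplus. apply sqrt_neg_0.
  pose proof (turn_sq h Hh) as Ha2. pose proof (turn_le_sqrt3 h) as Ha.
  set (a := turn h) in *. set (s := sqrt (9 - 12 * h)) in *.
  assert (s * s = 9 - 12 * h) by (apply sqrt_sqrt; lra).
  assert (sqrt 3 * sqrt 3 = 3) by (apply sqrt_sqrt; lra).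
  assert (Habs : Rabs u * Rabs u = u * u) by (rewrite <- Rabs_mult; apply Rabs_pos_eq; nra).
  assert (Hua : a * a <= u * u) by nra.
  assert (Hu3 : u * u <= 3) by nra.
  unfold W. nra.
Qed.

Lemma vplus_dcrit u : - sqrt 3 <= u <= sqrt 3 -> vplus (3 / 4) u = (3 - u ^ 2) / sqrt 6.
Proof.
  intros Hu.
  assert (sqrt 3 * sqrt 3 = 3) by (apply sqrt_sqrt; lra).
  assert (0 < sqrt 6) by (apply sqrt_lt_R0; lra).
  assert (Hu2 : u * u <= 3) by nra.
  unfold vplus, W.
  replace (2 * (3 / 4 - (u ^ 2 / 2 - u ^ 4 / 12))) with (((3 - u ^ 2) / sqrt 6) ^ 2).
  - apply sqrt_pow2. apply Rmult_le_pos; [nra | left; apply Rinv_0_lt_compat; lra].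
  - field_simplify; [| lra]. rewrite pow2_sqrt by lra. field.
Qed.

Lemma Rabs_mult_le a b A B : Rabs a <= A -> Rabs b <= B -> Rabs (a * b) <= A * B.
Proof. intros. rewrite Rabs_mult. apply Rmult_le_compat; auto using Rabs_pos. Qed.

Lemma continuous_of_sqrt_modulus (f : R -> R) C x0 :
  (forall x, Rabs (f x - f x0) <= C * sqrt (Rabs (x - x0))) -> continuous f x0.
Proof.
  intros Hf.
  set (g := fun x => C * sqrt (Rabs (x - x0))).
  assert (Hg0 : g x0 = 0) by (unfold g; rewrite Rminus_diag, Rabs_R0, sqrt_0; ring).
  assert (Hg : continuous g x0).
  { apply (continuous_mult (fun _ => C) (fun x => sqrt (Rabs (x - x0)))).
    - apply continuous_const.
    - apply continuous_sqrt_comp, continuous_Rabs_comp.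
      apply (continuous_minus (fun x => x) (fun _ => x0));
        [apply continuous_id | apply continuous_const]. }
  change (filterlim f (locally x0) (Rbar_locally (f x0))).
  apply (filterlim_le_le (fun x => f x0 - g x) _ (fun x => f x0 + g x)).
  - apply filter_forall. intros x. specialize (Hf x). apply Rabs_le_between in Hf.
    unfold g. lra.
  - replace (Rbar_locally (f x0)) with (locally (f x0 - g x0)) by (now rewrite Hg0, Rminus_0_r).
    apply (continuous_minus (fun _ => f x0) g); [apply continuous_const | exact Hg].
  - replace (Rbar_locally (f x0)) with (locally (f x0 + g x0)) by (now rewrite Hg0, Rplus_0_r).
    apply (continuous_plus (fun _ => f x0) g); [apply continuous_const | exact Hg].
Qed.

Section LevelIntegral.

Variable k : R -> R.
Hypothesis k_cont : forall u, continuous k u.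

Definition level_integral (h : R) : R :=
  RInt (fun u => k u * vplus h u) (- sqrt 3) (sqrt 3).

Lemma ex_RInt_mul_vplus h a b : ex_RInt (fun u => k u * vplus h u) a b.
Proof.
  apply (@ex_RInt_continuous R_CompleteNormedModule). intros z _.
  apply (continuous_mult k (vplus h)); [apply k_cont | apply continuous_vplus].
Qed.

Lemma oint_du_mul_v h :
  oint_du (fun u v => k u * v) h = 2 * RInt (fun u => k u * vplus h u) (- turn h) (turn h).
Proof.
  unfold oint_du.
  rewrite (RInt_ext (fun u => k u * - vplus h u) (fun u => opp (k u * vplus h u)))
    by (intros; unfold opp; simpl; ring).
  rewrite (@RInt_opp R_CompleteNormedModule) by apply ex_RInt_mul_vplus.
  rewrite (@opp_RInt_swap R_CompleteNormedModule) by apply ex_RInt_mul_vplus.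
  change opp with Ropp. simpl. ring.
Qed.

Lemma RInt_turn_eq_level_integral h : 0 <= h <= 3 / 4 ->
  RInt (fun u => k u * vplus h u) (- turn h) (turn h) = level_integral h.
Proof.
  intros Hh. unfold level_integral. pose proof (turn_le_sqrt3 h) as Ha.
  assert (Hzero : forall a b,
            (forall u, Rmin a b <= u <= Rmax a b -> turn h <= Rabs u <= sqrt 3) ->
            RInt (fun u => k u * vplus h u) a b = 0).
  { intros a b Hab. rewrite (RInt_ext _ (fun _ => 0)).
    - rewrite RInt_const. apply (@scal_zero_r R_AbsRing R_NormedModule).
    - intros u Hu. rewrite vplus_beyond_turn; [apply Rmult_0_r | exact Hh |].
      apply Hab; split; lra. }
  rewrite <- (RInt_Chasles _ (- sqrt 3) (- turn h) (sqrt 3)) by apply ex_RInt_mul_vplus.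
  rewrite <- (RInt_Chasles _ (- turn h) (turn h) (sqrt 3)) by apply ex_RInt_mul_vplus.
  rewrite (Hzero (- sqrt 3) (- turn h)), (Hzero (turn h) (sqrt 3)).
  - change plus with Rplus. now rewrite Rplus_0_l, Rplus_0_r.
  - intros u Hu. rewrite Rmin_left, Rmax_right in Hu by lra. rewrite Rabs_pos_eq; lra.
  - intros u Hu. rewrite Rmin_left, Rmax_right in Hu by lra. rewrite Rabs_left1; lra.
Qed.

Variable M : R.
Hypothesis k_bounded : forall u, - sqrt 3 <= u <= sqrt 3 -> Rabs (k u) <= M.

Lemma level_integral_sub_le h h' :
  Rabs (level_integral h - level_integral h')
  <= 2 * sqrt 3 * M * sqrt 2 * sqrt (Rabs (h - h')).
Proof.
  unfold level_integral.
  assert (0 <= sqrt 3) by apply sqrt_pos.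
  rewrite <- (RInt_minus (V := R_CompleteNormedModule)) by apply ex_RInt_mul_vplus.
  eapply Rle_trans.
  - apply (abs_RInt_le_const _ _ _ (M * (sqrt 2 * sqrt (Rabs (h - h'))))); [lra | |].
    + apply (ex_RInt_minus (V := R_CompleteNormedModule)); apply ex_RInt_mul_vplus.
    + intros u Hu. change minus with Rminus. simpl.
      replace (k u * vplus h u - k u * vplus h' u) with (k u * (vplus h u - vplus h' u)) by ring.
      apply Rabs_mult_le; [apply k_bounded, Hu | apply Rabs_vplus_sub_le].
  - lra.
Qed.

Lemma continuous_level_integral h : continuous level_integral h.
Proof.
  apply (continuous_of_sqrt_modulus _ (2 * sqrt 3 * M * sqrt 2)).
  intros. apply level_integral_sub_le.
Qed.

Lemma level_integral_dcrit (F : R -> R) :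
  (forall x, is_derive F x (k x * ((3 - x ^ 2) / sqrt 6))) ->
  level_integral (3 / 4) = F (sqrt 3) - F (- sqrt 3).
Proof.
  intros HF. unfold level_integral. pose proof (sqrt_pos 3).
  rewrite (RInt_ext _ (fun x => k x * ((3 - x ^ 2) / sqrt 6))).
  - apply is_RInt_unique, (@is_RInt_derive R_CompleteNormedModule); [now intros |].
    intros x _. apply (continuous_mult k (fun x => (3 - x ^ 2) / sqrt 6)); [apply k_cont |].
    apply (@ex_derive_continuous R_AbsRing R_NormedModule). auto_derive. trivial.
  - intros x Hx. rewrite Rmin_left, Rmax_right in Hx by lra.
    rewrite vplus_dcrit; [reflexivity | lra].
Qed.

End LevelIntegral.

Lemma sqrt3_pow3 : sqrt 3 ^ 3 = 3 * sqrt 3.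
Proof. replace (sqrt 3 ^ 3) with (sqrt 3 ^ 2 * sqrt 3) by ring. now rewrite pow2_sqrt by lra. Qed.

Lemma sqrt3_pow5 : sqrt 3 ^ 5 = 9 * sqrt 3.
Proof. replace (sqrt 3 ^ 5) with ((sqrt 3 ^ 2) ^ 2 * sqrt 3) by ring. rewrite pow2_sqrt by lra. ring. Qed.

Lemma continuous_sq (u : R) : continuous (fun x : R => x ^ 2) u.
Proof. apply (@ex_derive_continuous R_AbsRing R_NormedModule). auto_derive. trivial. Qed.

Lemma level_integral_sq_dcrit :
  level_integral (fun u => u ^ 2) (3 / 4) = 12 * sqrt 3 / (5 * sqrt 6).
Proof.
  assert (0 < sqrt 6) by (apply sqrt_lt_R0; lra).
  rewrite (level_integral_dcrit (fun u : R => u ^ 2) continuous_sq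
             (fun x => (x ^ 3 - x ^ 5 / 5) / sqrt 6)).
  - replace ((- sqrt 3) ^ 3) with (- sqrt 3 ^ 3) by ring.
    replace ((- sqrt 3) ^ 5) with (- sqrt 3 ^ 5) by ring.
    rewrite sqrt3_pow3, sqrt3_pow5. field. lra.
  - intros x. auto_derive; [lra | field; lra].
Qed.

Lemma level_integral_one_dcrit :
  level_integral (fun _ => 1) (3 / 4) = 4 * sqrt 3 / sqrt 6.
Proof.
  assert (0 < sqrt 6) by (apply sqrt_lt_R0; lra).
  rewrite (level_integral_dcrit (fun _ : R => 1) (fun u => continuous_const _ u)
             (fun x => (3 * x - x ^ 3 / 3) / sqrt 6)).
  - replace ((- sqrt 3) ^ 3) with (- sqrt 3 ^ 3) by ring.
    rewrite sqrt3_pow3. field. lra.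
  - intros x. auto_derive; [lra | field; lra].
Qed.

Definition level_ratio (h : R) : R :=
  level_integral (fun u => u ^ 2) h / level_integral (fun _ => 1) h.

Lemma B2t_level_ratio h : 0 <= h <= 3 / 4 -> B2t h = level_ratio h.
Proof.
  intros Hh. unfold B2t, level_ratio.
  replace (oint_du (fun _ v => v) h) with (oint_du (fun u v => (fun _ => 1) u * v) h)
    by (unfold oint_du; f_equal; apply RInt_ext; intros; simpl; ring).
  rewrite !oint_du_mul_v, !RInt_turn_eq_level_integral
    by (exact Hh || apply continuous_sq || intros; apply continuous_const).
  unfold Rdiv. rewrite Rinv_mult.
  replace (2 * _ * (/ 2 * _)) with (2 * / 2 * (level_integral (fun u => u ^ 2) h
    * / level_integral (fun _ => 1) h)) by ring.
  now rewrite Rinv_r, Rmult_1_l by lra.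
Qed.

Lemma level_ratio_dcrit : level_ratio dcrit = 3 / 5.
Proof.
  unfold level_ratio, dcrit. rewrite level_integral_sq_dcrit, level_integral_one_dcrit.
  assert (0 < sqrt 3) by (apply sqrt_lt_R0; lra).
  assert (0 < sqrt 6) by (apply sqrt_lt_R0; lra).
  field. lra.
Qed.

Lemma continuous_level_ratio : continuous level_ratio dcrit.
Proof.
  assert (Hsq : forall u, - sqrt 3 <= u <= sqrt 3 -> Rabs (u ^ 2) <= 3).
  { intros u Hu. assert (sqrt 3 * sqrt 3 = 3) by (apply sqrt_sqrt; lra).
    rewrite Rabs_pos_eq; nra. }
  apply (continuous_mult (level_integral (fun u => u ^ 2))
                         (fun h => / level_integral (fun _ => 1) h)).
  { exact (continuous_level_integral _ continuous_sq 3 Hsq dcrit). }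
  apply continuous_Rinv_comp.
  - apply (continuous_level_integral (fun _ => 1) (fun u => continuous_const _ u) 1).
    intros. rewrite Rabs_R1. lra.
  - unfold dcrit. rewrite level_integral_one_dcrit.
    assert (0 < sqrt 3) by (apply sqrt_lt_R0; lra).
    assert (0 < sqrt 6) by (apply sqrt_lt_R0; lra).
    apply Rgt_not_eq, Rdiv_lt_0_compat; lra.
Qed.

Lemma at_left_dcrit_nonneg : at_left dcrit (fun h => 0 <= h <= 3 / 4).
Proof.
  assert (Hpos : 0 < 3 / 4) by lra.
  exists (mkposreal _ Hpos). intros h Hball Hlt.
  apply Rabs_lt_between' in Hball. unfold dcrit in *. simpl in Hball. lra.
Qed.

Theorem mainTheorem7 :
  filterlim B2t (at_left dcrit) (locally (3 / 5)) /\
  filterlim c0 (at_left dcrit) (locally (5 / 2)).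
Proof.
  assert (HB : filterlim B2t (at_left dcrit) (locally (3 / 5))).
  { apply (filterlim_ext_loc level_ratio).
    { eapply filter_imp; [| exact at_left_dcrit_nonneg].
      intros h Hh. symmetry. now apply B2t_level_ratio. }
    apply (filterlim_filter_le_1 (F := locally dcrit)); [apply filter_le_within |].
    rewrite <- level_ratio_dcrit. exact continuous_level_ratio. }
  split; [exact HB |].
  apply (filterlim_comp _ _ _ B2t (fun x => 1 / (1 - x)) _ (locally (3 / 5)) _ HB).
  assert (Hc : continuous (fun x => 1 / (1 - x)) (3 / 5)).
  { apply (@ex_derive_continuous R_AbsRing R_NormedModule). auto_derive. lra. }
  replace (5 / 2) with (1 / (1 - 3 / 5)) by field. exact Hc.
Qed.
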